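(* Let $\hat G=(\hat V,\hat E,w)$ be a weighted graph admitting a valid partition, and let $\mathcal{C}=\{C_1,\dots,C_m\}$ ($m>1$) be the minimal valid partition of $\hat V$. Suppose there is a claw w.r.t. $\mathcal{C}$, say $\{y_m\mid y_1,y_2,y_3\}$ with $y_i\in C_i$ for $i\in\{1,2,3,m\}$ (after relabeling clusters). For each $i\in[4,m-1]$ fix an arbitrary representative $y_i\in C_i$, let $V'=\{y_1,\dots,y_m\}$, and let $\mathsf{w}=w(y_1,y_m)=w(y_2,y_m)=w(y_3,y_m)$. Call a pair $\{y_a,y_b\}\subseteq V'$ light if $w(y_a,y_b)<\mathsf{w}$. Let $\mathsf{C}\subseteq V'$ be a maximum clique in the graph on $V'$ whose edges are the light pairs, among cliques containing $y_1,y_2,y_3$. For each $y_i\in\mathsf{C}$ let $\Pi_i=(C_i,\ \bigcup_{\ell\ne i}C_\ell)$. Then $\hat G$ has a valid bi-partition if and only if $\Pi_i$ is valid for some $y_i\in\mathsf{C}$.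
   Context: Weights are symmetric, nonnegative, $0$ for non-edges. A partition $\mathcal{S}=(S_1,\dots,S_t)$, $t>1$, of $\hat V$ into nonempty disjoint sets is valid w.r.t. $\hat G$ if (i) for every triple of distinct vertices $v_i,v_j,v_k$ with $w_{ij}>\max\{w_{ik},w_{jk}\}$, either all three lie in the same part, or $v_i,v_j$ lie in one part and $v_k$ in another; and (ii) for every triple with $w_{ij}=w_{ik}>w_{jk}$, it is not the case that $v_j,v_k$ lie in the same part while $v_i$ lies in a different part. A valid bi-partition is a valid partition with two parts. The minimal valid partition is a valid partition $\mathcal{C}$ that refines every valid partition (each part of $\mathcal{C}$ is contained in some part of any other valid partition); it exists whenever a valid partition exists. Four vertices $\{v_i\mid v_j,v_k,v_\ell\}$ form a claw w.r.t. $\mathcal{C}$ if they lie in four different parts of $\mathcal{C}$ and $w_{ij}=w_{ik}=w_{i\ell}>\max\{w_{jk},w_{j\ell},w_{k\ell}\}$. *)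

From HB Require Import structures.
From mathcomp Require Import all_boot all_order all_algebra.
Set Implicit Arguments. Unset Strict Implicit. Unset Printing Implicit Defensive.
Import Order.TTheory GRing.Theory Num.Theory.
Local Open Scope ring_scope.

Definition same_part (V : finType) (P : {set {set V}}) (x y : V) : bool :=
  pblock P x == pblock P y.

Definition valid_partition (R : realDomainType) (V : finType)
    (w : V -> V -> R) (P : {set {set V}}) : Prop :=
  [/\ partition P [set: V], (1 < #|P|)%N,
      (forall i j k : V, i != j -> i != k -> j != k ->
         w i j > Num.max (w i k) (w j k) ->
         (same_part P i j && same_part P j k)
         || (same_part P i j && ~~ same_part P i k))
    & (forall i j k : V, i != j -> i != k -> j != k ->
         w i j = w i k -> w i k > w j k ->
         ~ (same_part P j k && ~~ same_part P i j))].

Definition valid_bipartition (R : realDomainType) (V : finType)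
    (w : V -> V -> R) (P : {set {set V}}) : Prop :=
  valid_partition w P /\ #|P| = 2%N.

Definition refines (V : finType) (C P : {set {set V}}) : Prop :=
  forall A, A \in C -> exists2 B, B \in P & A \subset B.

Definition minimal_valid_partition (R : realDomainType) (V : finType)
    (w : V -> V -> R) (C : {set {set V}}) : Prop :=
  valid_partition w C /\ (forall P, valid_partition w P -> refines C P).

Definition claw (R : realDomainType) (V : finType) (w : V -> V -> R)
    (C : {set {set V}}) (ym y1 y2 y3 : V) : Prop :=
  uniq [:: pblock C ym; pblock C y1; pblock C y2; pblock C y3] /\
  w ym y1 = w ym y2 /\ w ym y2 = w ym y3 /\
  w ym y1 > Num.max (w y1 y2) (Num.max (w y1 y3) (w y2 y3)).

Definition light_clique (R : realDomainType) (V : finType) (w : V -> V -> R)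
    (ww : R) (V' : {set V}) (y1 y2 y3 : V) (K : {set V}) : Prop :=
  [/\ K \subset V', y1 \in K, y2 \in K, y3 \in K
    & forall a b, a \in K -> b \in K -> a != b -> w a b < ww].

From HB Require Import structures.
From mathcomp Require Import all_boot all_order all_algebra.
Import Order.TTheory GRing.Theory Num.Theory.
Local Open Scope ring_scope.
Set Implicit Arguments. Unset Strict Implicit.

(* Let P be a valid bipartition; the minimal valid partition C refines it.
   In a valid partition a weight across two parts never exceeds a weight
   inside a part.  Rule (ii) puts at least two leaves p, q of the claw in the
   part of the centre y_m, so every vertex b of the other part satisfies
   w(b,p) <= w(p,q) < w = w(y_m,p).  Since y_m and p lie in different clusters,
   rule (i) for C gives w(y_m,b) >= w, hence w(b,b') >= w(y_m,b) >= w for any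
   two such b, b', and rule (i) puts them in one cluster: the other part of P
   is a single cluster C_i, i.e. P = Pi_i.  Its representative y_i is light to
   every member of the clique (at most as heavy as a light pair among them), so
   maximality of the clique forces y_i into it. *)

Section SamePart.

Variable V : finType.
Implicit Types (P C : {set {set V}}) (B : {set V}) (x y z : V).

Lemma same_part_refl P x : same_part P x x.
Proof. exact: eqxx. Qed.

Lemma same_part_sym P x y : same_part P x y = same_part P y x.
Proof. exact: eq_sym. Qed.

Lemma same_part_trans P y x z :
  same_part P x y -> same_part P y z -> same_part P x z.
Proof. by rewrite /same_part => /eqP -> /eqP ->. Qed.

Lemma diff_part_neq P x y : ~~ same_part P x y -> x != y.
Proof. by apply: contraNneq => ->; apply: same_part_refl. Qed.

Lemma pblock_memT P x : partition P [set: V] -> pblock P x \in P.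
Proof. by move=> hP; apply: pblock_mem; rewrite (cover_partition hP) inE. Qed.

Lemma same_partE P x y :
  partition P [set: V] -> (y \in pblock P x) = same_part P x y.
Proof.
move=> hP; rewrite /same_part eq_pblock ?(partition_trivIset hP) //.
by rewrite (cover_partition hP) inE.
Qed.

Lemma same_part_block P B x y :
  partition P [set: V] -> B \in P -> x \in B -> y \in B -> same_part P x y.
Proof.
move=> hP BP xB yB; have tP := partition_trivIset hP.
by rewrite /same_part (def_pblock tP BP xB) (def_pblock tP BP yB).
Qed.

Lemma refines_same_part C P x y :
  partition C [set: V] -> partition P [set: V] -> refines C P ->
  same_part C x y -> same_part P x y.
Proof.
move=> hC hP CP sxy; have [B BP CB] := CP _ (pblock_memT x hC).
by apply: (same_part_block hP BP); apply: (subsetP CB);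
  rewrite same_partE // same_part_refl.
Qed.

Lemma cover_partitionD1 P B :
  partition P [set: V] -> B \in P -> cover (P :\ B) = ~: B.
Proof.
move=> hP BP.
by rewrite coverD1 ?(partition_trivIset hP) // (cover_partition hP) setTD.
Qed.

Lemma bipartition_complement P x :
  partition P [set: V] -> #|P| = 2%N -> P = [set pblock P x; ~: pblock P x].
Proof.
move=> hP P2; have BP := pblock_memT x hP.
have /cards1P [Z PZ] : #|P :\ pblock P x| == 1%N.
  by move: P2; rewrite (cardsD1 (pblock P x)) BP add1n => -[->].
have := cover_partitionD1 hP BP; rewrite PZ cover1 => ZE.
by rewrite -{1}(setD1K BP) PZ ZE.
Qed.

Lemma bipartition_common_block C P B :
  partition C [set: V] -> partition P [set: V] -> #|P| = 2%N ->
  B \in P -> B \in C -> P = [set B; cover (C :\ B)].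
Proof.
move=> hC hP P2 BP BC; have [x xB] := set0Pn _ (partition_neq0 hP BP).
rewrite cover_partitionD1 // {1}(bipartition_complement x hP P2).
by rewrite (def_pblock (partition_trivIset hP) BP xB).
Qed.

Lemma rep_block_eq C (rep : {set V} -> V) B x :
  trivIset C -> (forall X, X \in C -> rep X \in X) -> B \in C ->
  x \in [set rep X | X in C] -> x \in B -> x = rep B.
Proof.
move=> tC hrep BC /imsetP [X XC ->] xB.
by rewrite -(def_pblock tC XC (hrep X XC)) (def_pblock tC BC xB).
Qed.

End SamePart.

Section Validity.

Variables (R : realDomainType) (V : finType) (w : V -> V -> R).
Hypothesis w_sym : forall x y, w x y = w y x.
Implicit Types (P C : {set {set V}}) (i j k x y : V).

Lemma valid_heavy_same_part P i j k :
  valid_partition w P -> i != j -> i != k -> j != k ->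
  w i k < w i j -> w j k < w i j -> same_part P i j.
Proof.
case=> _ _ heavy _ nij nik njk ltik ltjk.
have := heavy i j k nij nik njk; rewrite gt_max ltik ltjk.
by move=> /(_ isT) /orP [] /andP [].
Qed.

Lemma valid_cross_le P i j k :
  valid_partition w P -> j != k -> same_part P j k -> ~~ same_part P i j ->
  w i j <= w j k.
Proof.
move=> hP njk sjk nij; have nik : ~~ same_part P i k.
  apply: contra nij => sik.
  by apply: same_part_trans sik _; rewrite same_part_sym.
have [dij dik] := (diff_part_neq nij, diff_part_neq nik).
rewrite leNgt; apply/negP => ltjk.
case: (ltrgtP (w i j) (w i k)) => cmp.
- have nkj : k != j by rewrite eq_sym.
  have := valid_heavy_same_part hP dik dij nkj cmp.
  by rewrite w_sym (lt_trans ltjk cmp) (negbTE nik) => /(_ isT).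
- have := valid_heavy_same_part hP dij dik njk cmp ltjk.
  by rewrite (negbTE nij).
- case: hP => _ _ _ /(_ i j k dij dik njk cmp); rewrite -cmp ltjk sjk nij.
  by move=> /(_ isT).
Qed.

Lemma valid_bipartition_arm P i j k :
  valid_bipartition w P -> i != j -> i != k -> j != k ->
  w i j = w i k -> w j k < w i k -> same_part P i j || same_part P i k.
Proof.
move=> [[hPp _ _ hlight] P2] nij nik njk eqw ltw.
apply/contraT => /norP [nsij nsik].
have sjk : same_part P j k.
  apply: (same_part_block hPp (B := ~: pblock P i)).
  - by rewrite {2}(bipartition_complement i hPp P2) !inE eqxx orbT.
  - by rewrite inE same_partE.
  - by rewrite inE same_partE.
by case: (hlight i j k nij nik njk eqw ltw); rewrite sjk nsij.
Qed.

Lemma valid_pair_bipartition (A B : {set V}) :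
  valid_partition w [set A; B] -> valid_bipartition w [set A; B].
Proof.
by move=> hv; split=> //; case: hv; rewrite cards2; case: (A != B).
Qed.

Lemma light_clique_max_mem (ww : R) V' y1 y2 y3 K x :
  light_clique w ww V' y1 y2 y3 K ->
  (forall K', light_clique w ww V' y1 y2 y3 K' -> (#|K'| <= #|K|)%N) ->
  x \in V' -> (forall a, a \in K -> a != x -> w x a < ww) -> x \in K.
Proof.
move=> [KV' y1K y2K y3K Kl] Kmax xV' xl; apply/contraT => xK.
suff /Kmax : light_clique w ww V' y1 y2 y3 (x |: K).
  by rewrite cardsU1 xK add1n ltnn.
split; rewrite ?inE ?y1K ?y2K ?y3K ?orbT //.
  by apply/subsetP => a; rewrite !inE => /predU1P [->|/(subsetP KV')].
move=> a b; rewrite !inE => /predU1P [->|aK] /predU1P [->|bK]; rewrite ?eqxx //.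
- by move=> xb; apply: xl; rewrite // eq_sym.
- by move=> ax; rewrite w_sym; apply: xl.
- exact: Kl.
Qed.

Section Claw.

Variables (C : {set {set V}}) (ym y1 y2 y3 : V).
Hypothesis hclaw : claw w C ym y1 y2 y3.

Lemma claw_uniq : uniq [:: ym; y1; y2; y3].
Proof. by apply: (map_uniq (f := pblock C)); case: hclaw. Qed.

Lemma claw_leaf p q :
  p \in [:: y1; y2; y3] -> q \in [:: y1; y2; y3] -> p != q ->
  [/\ w ym p = w ym y1, w p q < w ym y1 & ~~ same_part C ym p].
Proof.
case: hclaw => uC [e12 [e23]]; rewrite !gt_max => /and3P [l12 l13 l23].
move: uC; rewrite /= !inE !negb_or => /and4P [/and3P [nC1 nC2 nC3] _ _ _].
have [e2 e3] : w ym y2 = w ym y1 /\ w ym y3 = w ym y1 by rewrite -e23 -e12.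
move=> /or3P [] /eqP -> /or3P [] /eqP ->; rewrite ?eqxx // => _;
  by split; rewrite // ?e2 ?e3 // ?(w_sym y2 y1) ?(w_sym y3 y1) ?(w_sym y3 y2).
Qed.

Lemma claw_center_part P : valid_bipartition w P ->
  exists p q, [/\ p \in [:: y1; y2; y3], q \in [:: y1; y2; y3], p != q,
                  same_part P ym p & same_part P ym q].
Proof.
move=> hP; have := claw_uniq; rewrite /= !inE !negb_or.
move=> /and4P [/and3P [nm1 nm2 nm3] /andP [n12 n13] n23 _].
have arm s t : s \in [:: y1; y2; y3] -> t \in [:: y1; y2; y3] -> s != t ->
    ym != s -> ym != t -> same_part P ym s || same_part P ym t.
  move=> sL tL nst nms nmt; have [es lst _] := claw_leaf sL tL nst.
  have nts : t != s by rewrite eq_sym.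
  have [et _ _] := claw_leaf tL sL nts.
  by apply: (valid_bipartition_arm hP nms nmt nst); rewrite ?es ?et.
have [L1 L2 L3] : [/\ y1 \in [:: y1; y2; y3], y2 \in [:: y1; y2; y3]
                    & y3 \in [:: y1; y2; y3]] by rewrite !inE !eqxx ?orbT.
have [s1|s1] := boolP (same_part P ym y1).
  have [s2|s2] := boolP (same_part P ym y2); first by exists y1, y2.
  have := arm y2 y3 L2 L3 n23 nm2 nm3; rewrite (negbTE s2) => s3.
  by exists y1, y3.
have := arm y1 y2 L1 L2 n12 nm1 nm2; rewrite (negbTE s1) => s2.
have := arm y1 y3 L1 L3 n13 nm1 nm3; rewrite (negbTE s1) => s3.
by exists y2, y3.
Qed.

End Claw.

End Validity.

Section OtherPart.

Variables (R : realDomainType) (V : finType) (w : V -> V -> R).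
Hypothesis w_sym : forall x y, w x y = w y x.
Variables C P : {set {set V}}.
Hypotheses (hC : valid_partition w C) (hP : valid_bipartition w P)
  (CP : refines C P).
Variables ym p q : V.
Hypotheses (sp : same_part P ym p) (sq : same_part P ym q) (npq : p != q)
  (lpq : w p q < w ym p) (nCp : ~~ same_part C ym p).

Let O := ~: pblock P ym.

Let hPp : partition P [set: V]. Proof. by case: hP => -[]. Qed.
Let hCp : partition C [set: V]. Proof. by case: hC. Qed.

Lemma mem_other x : (x \in O) = ~~ same_part P ym x.
Proof. by rewrite inE same_partE. Qed.

Lemma other_in_P : O \in P.
Proof.
by rewrite /O {2}(bipartition_complement ym hPp hP.2) !inE eqxx orbT.
Qed.

Lemma other_cross_le x a c :
  x \in O -> a \notin O -> c \notin O -> a != c -> w x a <= w a c.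
Proof.
rewrite !mem_other !negbK => nx sa sc nac.
apply: (valid_cross_le w_sym hP.1 nac).
  by apply: same_part_trans sc; rewrite same_part_sym.
by apply: contra nx => sxa; apply: same_part_trans sa _; rewrite same_part_sym.
Qed.

Lemma other_lt x : x \in O -> w x p < w ym p.
Proof.
rewrite mem_other => nx; apply: le_lt_trans lpq.
apply: (valid_cross_le w_sym hP.1 npq).
  by apply: same_part_trans sq; rewrite same_part_sym.
by apply: contra nx => sxp; apply: same_part_trans sp _; rewrite same_part_sym.
Qed.

Lemma other_ge x : x \in O -> w ym p <= w ym x.
Proof.
move=> xO; rewrite leNgt; apply: contra nCp => ltx.
have nx : ~~ same_part P ym x by rewrite -mem_other.
have npx : p != x by apply: contraNneq nx => <-.
apply: (valid_heavy_same_part hC (diff_part_neq nCp) (diff_part_neq nx) npx).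
  exact: ltx.
by rewrite w_sym other_lt.
Qed.

Lemma other_same_C x y : x \in O -> y \in O -> same_part C x y.
Proof.
move=> xO yO; have [<-|nxy] := eqVneq x y; first exact: same_part_refl.
have wxy : w ym p <= w x y.
  apply: le_trans (other_ge xO) _.
  apply: (valid_cross_le w_sym hP.1 nxy); last by rewrite -mem_other.
  exact: same_part_block hPp other_in_P xO yO.
have pO : p \notin O by rewrite mem_other sp.
have [nxp nyp] : x != p /\ y != p.
  by split; apply: contraNneq pO => <-.
by apply: (valid_heavy_same_part hC nxy nxp nyp); apply: lt_le_trans wxy;
  apply: other_lt.
Qed.

Lemma other_in_C : O \in C.
Proof.
have [b bO] := set0Pn _ (partition_neq0 hPp other_in_P).
suff -> : O = pblock C b by apply: pblock_memT.
apply/setP => x; rewrite same_partE //.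
apply/idP/idP; first exact: other_same_C.
move=> /(refines_same_part hCp hPp CP).
by rewrite -same_partE // (def_pblock (partition_trivIset hPp) other_in_P bO).
Qed.

End OtherPart.

Unset Implicit Arguments. Set Strict Implicit.

Theorem lemma1 (R : realDomainType) (V : finType) (w : V -> V -> R)
  (w_sym : forall x y, w x y = w y x) (w_ge0 : forall x y, 0 <= w x y)
  (C : {set {set V}}) (hC : minimal_valid_partition w C)
  (ym y1 y2 y3 : V) (hclaw : claw w C ym y1 y2 y3)
  (rep : {set V} -> V) (hrep : forall X, X \in C -> rep X \in X)
  (hrepm : rep (pblock C ym) = ym) (hrep1 : rep (pblock C y1) = y1)
  (hrep2 : rep (pblock C y2) = y2) (hrep3 : rep (pblock C y3) = y3)
  (K : {set V})
  (hK : light_clique w (w y1 ym) [set rep X | X in C] y1 y2 y3 K)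
  (hKmax : forall K', light_clique w (w y1 ym) [set rep X | X in C] y1 y2 y3 K' ->
                      (#|K'| <= #|K|)%N) :
  (exists P, valid_bipartition w P) <->
  (exists2 y, y \in K &
     valid_partition w [set pblock C y; cover (C :\ pblock C y)]).
Proof.
have [hCv hCmin] := hC; have [hCp _ _ _] := hCv.
have tC := partition_trivIset hCp.
have [Ksub y1K y2K y3K Kl] := hK.
split=> [[P hP]|[y _ hy]]; last first.
  by eexists; apply: valid_pair_bipartition hy.
have hPp : partition P [set: V] by case: hP => -[].
have [p [q [pL qL npq sp sq]]] := claw_center_part w_sym hclaw hP.
have [ewp lpq nCp] := claw_leaf w_sym hclaw pL qL npq; rewrite -ewp in lpq.
set O := ~: pblock P ym.
have OC : O \in C := other_in_C w_sym hCv hP (hCmin P hP.1) sp sq npq lpq nCp.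
have OP : O \in P := other_in_P hP ym.
have pbO : pblock C (rep O) = O := def_pblock tC OC (hrep O OC).
exists (rep O); last first.
  by rewrite pbO -(bipartition_common_block hCp hPp hP.2 OP OC); case: hP.
apply: (light_clique_max_mem w_sym hK hKmax); first exact: imset_f.
move=> a aK naO; have aO : a \notin O.
  apply: contra naO => aO.
  by rewrite (rep_block_eq tC hrep OC (subsetP Ksub a aK) aO).
have LK : {subset [:: y1; y2; y3] <= K}.
  by move=> x; rewrite !inE => /or3P [] /eqP ->.
have [pO qO] : p \notin O /\ q \notin O by rewrite !(mem_other hP) sp sq.
have [c [cK cO nac]] : exists c, [/\ c \in K, c \notin O & a != c].
  by have [->|nap] := eqVneq a p; [exists q | exists p]; rewrite ?LK.
apply: le_lt_trans (Kl a c aK cK nac).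
exact: (other_cross_le (ym := ym) w_sym hP (hrep O OC) aO cO nac).
Qed.
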